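(* Let $d > 4$ be an integer and let $K$ be the field of fractions of a complete discrete valuation ring $\mathcal{O}$. In the coefficient-choosing game of degree $d$ over $K$, whichever player makes the last move has a winning strategy.
   Context: The coefficient-choosing game of degree $d$ over $K$: Nora and Wanda alternately choose coefficients of $f(x) = a_d x^d + \cdots + a_0$; on each move the current player picks a not-yet-chosen coefficient and assigns it a value in $K$, subject to $a_d \neq 0$, $a_0 \neq 0$. After all $d+1$ coefficients are chosen, Wanda wins if $f$ has a root in $K$, and Nora wins otherwise. Who moves first is fixed in advance, which determines who makes the last move. *)

From HB Require Import structures.
From mathcomp Require Import all_boot all_order all_algebra.
Set Implicit Arguments. Unset Strict Implicit. Unset Printing Implicit Defensive.
Import Order.TTheory GRing.Theory Num.Theory.
Local Open Scope ring_scope.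

(* v : K -> int is a normalized discrete valuation on K^x (its value at 0 is
   irrelevant and never used).  The valuation ring is O = {x | x = 0 \/ 0 <= v x}
   and K = Frac(O). *)
Record discrete_valuation (K : fieldType) (v : K -> int) : Prop := {
  dv_mul : forall x y, x != 0 -> y != 0 -> v (x * y) = v x + v y;
  dv_add : forall x y, x != 0 -> y != 0 -> x + y != 0 ->
             Num.min (v x) (v y) <= v (x + y);
  dv_surj : forall n : int, exists2 x : K, x != 0 & v x = n }.

(* the v-adic "distance" between x and y is at most q^-N *)
Definition vclose (K : fieldType) (v : K -> int) (N : int) (x y : K) : Prop :=
  x = y \/ N <= v (x - y).

Definition vcauchy (K : fieldType) (v : K -> int) (u : nat -> K) : Prop :=
  forall N : int, exists M : nat, forall m n : nat,
    (M <= m)%N -> (M <= n)%N -> vclose v N (u m) (u n).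

Definition vconverges (K : fieldType) (v : K -> int) (u : nat -> K) (l : K) : Prop :=
  forall N : int, exists M : nat, forall n : nat, (M <= n)%N -> vclose v N (u n) l.

Definition in_vring (K : fieldType) (v : K -> int) (x : K) : Prop :=
  x = 0 \/ 0 <= v x.

Definition complete_dvr (K : fieldType) (v : K -> int) : Prop :=
  discrete_valuation v /\
  forall u : nat -> K, (forall n, in_vring v (u n)) -> vcauchy v u ->
    exists2 l : K, in_vring v l & vconverges v u l.

Inductive player := Nora | Wanda.

Definition other (p : player) : player :=
  match p with Nora => Wanda | Wanda => Nora end.

Definition same_player (p q : player) : bool :=
  match p, q with Nora, Nora | Wanda, Wanda => true | _, _ => false end.

Definition position (K : fieldType) (d : nat) := 'I_d.+1 -> option K.

Definition start_pos (K : fieldType) (d : nat) : position K d := fun _ => None.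

Definition legal_move (K : fieldType) (d : nat) (s : position K d)
    (i : 'I_d.+1) (c : K) : Prop :=
  s i = None /\ (((i : nat) == 0%N) || ((i : nat) == d) -> c != 0).

Definition play (K : fieldType) (d : nat) (s : position K d)
    (i : 'I_d.+1) (c : K) : position K d :=
  fun j => if j == i then Some c else s j.

Definition pos_poly (K : fieldType) (d : nat) (s : position K d) : {poly K} :=
  \sum_(i < d.+1) odflt 0 (s i) *: 'X^i.

Definition winner_of (K : fieldType) (d : nat) (s : position K d) (p : player) : Prop :=
  match p with
  | Wanda => exists x : K, root (pos_poly s) x
  | Nora => forall x : K, ~~ root (pos_poly s) x
  end.

Fixpoint wins (K : fieldType) (d : nat) (p mover : player) (n : nat)
    (s : position K d) : Prop :=
  match n with
  | 0 => winner_of s p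
  | n'.+1 =>
      if same_player mover p then
        exists i c, legal_move s i c /\ wins p (other mover) n' (play s i c)
      else
        forall i c, legal_move s i c -> wins p (other mover) n' (play s i c)
  end.

Definition has_winning_strategy (K : fieldType) (d : nat) (first p : player) : Prop :=
  wins p first d.+1 (@start_pos K d).

(* There are d+1 moves, numbered 0..d; move k is made by [first] iff k is even. *)
Definition last_mover (d : nat) (first : player) : player :=
  if odd d then other first else first.

(* If Nora moves last, she spends her earlier moves filling a_1 and a_(d-1), so
   that her last move is at an index k with k <> 1 and d - k <> 1.  There she
   gives a_k a valuation -M with M huge.  The Newton polygon of f then consists
   of the two segments (0, v a_0) -- (k, -M) -- (d, v a_d), and M is chosen so
   that neither slope is an integer; as the valuation of a root of f is minus a
   slope of its Newton polygon, f has no root in K.  Avoiding the two residue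
   classes is possible because k, d - k <> 1 and, as d > 4, they are not both 2.
   If Wanda moves last, she sets a_k := - g(x) / x ^ k for the polynomial g of
   the other coefficients and some x <> 0 with g(x) <> 0, which exists because
   a valued field is infinite. *)

From mathcomp Require Import all_boot all_order all_algebra.
From mathcomp Require Import zify.
Set Implicit Arguments. Unset Strict Implicit. Unset Printing Implicit Defensive.
Import Order.TTheory GRing.Theory Num.Theory.
Local Open Scope ring_scope.

Lemma dvdz_gap (p m r : int) : 0 < r < p -> (p %| m)%Z -> ~~ (p %| m + r)%Z.
Proof.
by move=> r_bd /dvdzP[n ->]; apply/dvdzP => -[n']; case: (lerP (n' - n) 0) => ?; nia.
Qed.

Lemma exists_gt_not_dvdz2 (p q a b X : int) : 2 <= p -> 3 <= q ->
  exists M, [/\ X < M, ~~ (p %| a + M)%Z & ~~ (q %| b + M)%Z].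
Proof.
move=> p2 q3; pose t := `|X| + `|a| + 2.
have tX : X + a + 1 < p * t.
  have : X + a + 2 <= t by rewrite /t; lia.
  have : 0 <= t by rewrite /t; lia.
  nia.
have [q_mid|q_nmid] := boolP (q %| b + (p * t - a + 1))%Z.
  exists (p * t - a - 1); split; first lia.
  - have -> : a + (p * t - a - 1) = p * (t - 1) + (p - 1) by lia.
    by apply: dvdz_gap; [lia | rewrite dvdz_mulr].
  - apply: contraL q_mid => q_mid.
    have -> : b + (p * t - a + 1) = b + (p * t - a - 1) + 2 by lia.
    by apply: dvdz_gap; first lia.
exists (p * t - a + 1); split => //; first lia.
have -> : a + (p * t - a + 1) = p * t + 1 by lia.
by apply: dvdz_gap; [lia | rewrite dvdz_mulr].
Qed.

Lemma exists_nonintegral_slopes (d k : nat) (w0 wd X : int) :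
  (4 < d)%N -> (k <= d)%N -> k != 1%N -> k != d.-1 ->
  exists M, [/\ X < M, k != 0%N -> ~~ (k%:Z %| w0 + M)%Z
                     & k != d -> ~~ ((d - k)%N%:Z %| wd + M)%Z].
Proof.
move=> d_gt4 kd k1 kd1.
have [-> | k0] := eqVneq k 0%N.
  have [|//|M [XM wdM _]] := @exists_gt_not_dvdz2 d%:Z 3 wd 0 X; first lia.
  by exists M; split; rewrite ?subn0.
have [-> | kD] := eqVneq k d.
  have [|//|M [XM w0M _]] := @exists_gt_not_dvdz2 d%:Z 3 w0 0 X; first lia.
  by exists M; split.
have [dk3 | k3] : (3 <= d - k)%N \/ (3 <= k)%N by lia.
  have [||M [XM w0M wdM]] := @exists_gt_not_dvdz2 k%:Z (d - k)%N%:Z w0 wd X; try lia.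
  by exists M.
have [||M [XM wdM w0M]] := @exists_gt_not_dvdz2 (d - k)%N%:Z k%:Z wd w0 X; try lia.
by exists M.
Qed.

Lemma slope_ub (i j : nat) (wi wj m B : int) : (i < j)%N ->
  `|wi| <= B -> `|wj| <= B -> wj + j%:Z * m <= wi + i%:Z * m -> m <= 2 * B.
Proof. by move=> ij wiB wjB; case: (lerP m 0) => ?; nia. Qed.

Lemma slope_lb (i j : nat) (wi wj m B : int) : (i < j)%N ->
  `|wi| <= B -> `|wj| <= B -> wi + i%:Z * m <= wj + j%:Z * m -> - (2 * B) <= m.
Proof. by move=> ij wiB wjB; case: (lerP 0 m) => ?; nia. Qed.

Lemma deep_point_below (d i k : nat) (wi m M B : int) :
  (i <= d)%N -> (k <= d)%N -> `|wi| <= B -> (2 * d + 1)%:Z * B < M ->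
  ((i < k)%N -> m <= 2 * B) -> ((k < i)%N -> - (2 * B) <= m) ->
  - M + k%:Z * m < wi + i%:Z * m.
Proof.
move=> i_le k_le wiB MB ub lb.
have [ik|ki|->] := ltngtP i k.
- by have := ub ik; case: (lerP m 0) => ?; nia.
- by have := lb ki; case: (lerP 0 m) => ?; nia.
- by nia.
Qed.

(* The points (j, w j), j in S, are the Newton polygon data of \sum_j a_j X^j
   with w j = v a_j; k is the deep point, m = v x for a putative root x, and
   T j = v (a_j x^j).  slope0 and sloped say that the segments from the deep
   point to the two ends have non-integral slopes. *)
Section NewtonPolygon.

Variables (d : nat) (w : 'I_d.+1 -> int) (S : pred 'I_d.+1) (k : 'I_d.+1) (M B m : int).
Hypotheses (S0 : ord0 \in S) (Sd : ord_max \in S) (wk : w k = - M)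
  (w_bd : forall j, j \in S -> j != k -> `|w j| <= B)
  (MB : (2 * d + 1)%:Z * B < M)
  (slope0 : (k : nat) != 0%N -> ~~ (k%:Z %| w ord0 + M)%Z)
  (sloped : (k : nat) != d -> ~~ ((d - k)%N%:Z %| w ord_max + M)%Z).

Let T (j : 'I_d.+1) := w j + (j : nat)%:Z * m.

Lemma newton_min_off_deep i j : i \in S -> j \in S -> i != j -> i != k -> j != k ->
  T i = T j -> T k < T i.
Proof.
move=> Si Sj ij ik jk Tij; have wiB := w_bd Si ik; have wjB := w_bd Sj jk.
have le_Tij : T i <= T j by rewrite Tij.
have le_Tji : T j <= T i by rewrite Tij.
have [m_ub m_lb] : m <= 2 * B /\ - (2 * B) <= m.
  case: (ltngtP i j) => [lt_ij|lt_ji|/val_inj eq_ij]; last by rewrite eq_ij eqxx in ij.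
    by split; [exact: slope_ub lt_ij wiB wjB le_Tji | exact: slope_lb lt_ij wiB wjB le_Tij].
  by split; [exact: slope_ub lt_ji wjB wiB le_Tij | exact: slope_lb lt_ji wjB wiB le_Tji].
by rewrite /T wk; apply: (deep_point_below (leq_ord i) (leq_ord k) wiB MB).
Qed.

Lemma newton_min_at_deep i : i \in S -> i != k -> T i = T k ->
  T i <= T ord0 -> T i <= T ord_max -> False.
Proof.
move=> Si ik Tik Ti0 Tid; have wiB := w_bd Si ik.
have [i0 | i_gt0] := posnP i.
  have k0 : (k : nat) != 0%N by apply: contra ik => /eqP k0; apply/eqP/val_inj => /=; lia.
  apply: (negP (slope0 k0)); apply/dvdzP; exists m.
  by move: Tik; rewrite /T (_ : i = ord0) ?wk //=; [lia | apply: val_inj].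
have [i_d | i_nd] := eqVneq (i : nat) d.
  have kd : (k : nat) != d by apply: contra ik => /eqP kd; apply/eqP/val_inj => /=; lia.
  apply: (negP (sloped kd)); apply/dvdzP; exists (- m).
  by move: Tik (leq_ord k); rewrite /T (_ : i = ord_max) ?wk //=; [lia | apply: val_inj].
have i_ltd : (i < d)%N by have := leq_ord i; lia.
suff : T k < T i by rewrite Tik ltxx.
rewrite /T wk; apply: (deep_point_below (leq_ord i) (leq_ord k) wiB MB) => [ik'|ki'].
  have k0 : ord0 != k by apply: contraTneq ik' => <-.
  exact: slope_ub i_gt0 (w_bd S0 k0) wiB Ti0.
have kd : ord_max != k by apply: contraTneq ki' => <-; rewrite -leqNgt leq_ord.
exact: slope_lb i_ltd wiB (w_bd Sd kd) Tid.
Qed.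

End NewtonPolygon.

Section DiscreteValuation.

Variables (K : fieldType) (v : K -> int).
Hypothesis hv : discrete_valuation v.

Lemma dv1 : v 1 = 0.
Proof. by apply: (addrI (v 1)); rewrite addr0 -dv_mul ?oner_neq0 // mulr1. Qed.

Lemma dvN x : x != 0 -> v (- x) = v x.
Proof.
move=> x0; have N1 : (-1 : K) != 0 by rewrite oppr_eq0 oner_neq0.
have vN1 : v (-1) = 0 by have := dv_mul hv N1 N1; rewrite mulrNN mulr1 dv1; lia.
by rewrite -mulN1r dv_mul // vN1 add0r.
Qed.

Lemma dvX x n : x != 0 -> v (x ^+ n) = n%:Z * v x.
Proof.
move=> x0; elim: n => [|n IHn]; first by rewrite expr0 dv1 mul0r.
by rewrite exprS dv_mul ?expf_neq0 // IHn; lia.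
Qed.

Lemma dv_sum_gt (I : finType) (P : pred I) (y : I -> K) V :
  (forall j, P j -> y j != 0 -> V < v (y j)) ->
  \sum_(j | P j) y j != 0 -> V < v (\sum_(j | P j) y j).
Proof.
move=> y_gt; apply: (big_ind (fun s => s != 0 -> V < v s)) => //; first by rewrite eqxx.
move=> a b IHa IHb; have [-> | a0] := eqVneq a 0; first by rewrite add0r.
have [-> | b0] := eqVneq b 0; first by rewrite addr0.
move=> ab0; apply: lt_le_trans (dv_add hv a0 b0 ab0).
by rewrite lt_min IHa ?IHb.
Qed.

Lemma dv_sum_eq0_min_twice (I : finType) (y : I -> K) j0 :
  \sum_j y j = 0 -> y j0 != 0 ->
  exists i j, [/\ i != j, y i != 0, y j != 0, v (y i) = v (y j)
                & forall l, y l != 0 -> v (y i) <= v (y l)].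
Proof.
move=> sum0 yj0.
case: (@arg_minP _ _ _ j0 (fun l => y l != 0) (fun l => v (y l)) yj0) => i yi0 i_min.
have [j /and3P[ji yj le_ji] | no_tie] :=
    pickP [pred j | [&& j != i, y j != 0 & v (y j) <= v (y i)]].
  exists i, j; split => //; first by rewrite eq_sym.
  by apply/eqP; rewrite eq_le le_ji i_min.
have others : \sum_(j | j != i) y j = - y i.
  by apply/eqP; rewrite -addr_eq0 addrC; move: sum0; rewrite (bigD1 i) //= => ->.
have gt_others j : j != i -> y j != 0 -> v (y i) < v (y j).
  by move=> ji yj; have := no_tie j; rewrite /= ji yj /= => /negbT; rewrite -ltNge.
by have := dv_sum_gt gt_others; rewrite others dvN // ltxx oppr_eq0 yi0 => /(_ isT).
Qed.

Lemma dv_exists_nonroot (p : {poly K}) : p != 0 -> exists2 x, x != 0 & ~~ root p x.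
Proof.
move=> p0; have [pi pi0 v_pi] := dv_surj hv 1.
pose f n := pi ^+ n.+1.
have f_inj : injective f.
  by move=> m n /(congr1 v); rewrite !dvX // v_pi !mulr1 => -[].
have f0 n : f n != 0 by rewrite expf_neq0.
have : ~~ all (root p) (map f (iota 0 (size p))).
  apply: contraTN (leqnn (size p)) => all_roots; rewrite -ltnNge.
  have := max_poly_roots p0 all_roots.
  by rewrite map_inj_uniq ?iota_uniq // size_map size_iota; apply.
by case/allPn => _ /mapP[n _ ->]; exists (f n).
Qed.

Lemma no_root_of_deep_coef (d : nat) (a : 'I_d.+1 -> K) (k : 'I_d.+1) (M B : int) :
  a ord0 != 0 -> a ord_max != 0 -> a k != 0 -> v (a k) = - M ->
  (forall j, a j != 0 -> j != k -> `|v (a j)| <= B) ->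
  (2 * d + 1)%:Z * B < M ->
  ((k : nat) != 0%N -> ~~ (k%:Z %| v (a ord0) + M)%Z) ->
  ((k : nat) != d -> ~~ ((d - k)%N%:Z %| v (a ord_max) + M)%Z) ->
  forall x, \sum_(j < d.+1) a j * x ^+ j != 0.
Proof.
move=> a0 ad ak vk a_bd MB slope0 sloped x.
have [-> | x0] := eqVneq x 0.
  by rewrite big_ord_recl expr0 mulr1 big1 ?addr0 // => j _; rewrite expr0n mulr0.
apply/eqP => sum0.
pose S := [pred l | a l != 0].
pose T l := v (a l) + (l : nat)%:Z * v x.
have y_neq0 l : (a l * x ^+ l != 0) = (l \in S).
  by rewrite mulf_eq0 expf_eq0 (negPf x0) andbF orbF.
have vy l : l \in S -> v (a l * x ^+ l) = T l by move=> Sl; rewrite dv_mul ?dvX ?expf_neq0.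
have [|i [j [ij]]] := dv_sum_eq0_min_twice sum0 (j0 := ord0); first by rewrite y_neq0.
rewrite !y_neq0 => Si Sj; rewrite !vy // => Tij i_min.
have {}i_min l : l \in S -> T i <= T l by move=> Sl; rewrite -(vy l Sl) i_min ?y_neq0.
have deep l : l \in S -> l != k -> T l = T k ->
    T l <= T ord0 -> T l <= T ord_max -> False.
  exact: (newton_min_at_deep (S := S) a0 ad vk a_bd MB slope0 sloped).
have [ik | ik] := eqVneq i k.
  by apply: (deep j Sj); rewrite -?ik 1?eq_sym // -Tij; apply: i_min.
have [jk | jk] := eqVneq j k.
  by apply: (deep i Si); rewrite -?jk //; apply: i_min.
have := newton_min_off_deep (S := S) (m := v x) vk a_bd MB Si Sj ij ik jk Tij.
by rewrite ltNge i_min.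
Qed.

End DiscreteValuation.

Lemma otherK : involutive other. Proof. by case. Qed.

Section Positions.

Variables (K : fieldType) (d : nat).
Implicit Types (s : position K d) (i j k : 'I_d.+1) (c : K).

Definition free_count s : nat := #|[pred i | s i == None]|.

Definition ends_nonzero s : Prop :=
  forall i c, s i = Some c -> ((i : nat) == 0%N) || ((i : nat) == d) -> c != 0.

Definition ongoing (n : nat) s : Prop := free_count s = n.+1 /\ ends_nonzero s.

Lemma play_eq s i c : play s i c i = Some c.
Proof. by rewrite /play eqxx. Qed.

Lemma play_ne s i c j : j != i -> play s i c j = s j.
Proof. by rewrite /play => /negPf->. Qed.

Lemma legal_move1 s i : s i = None -> legal_move s i 1.
Proof. by split=> // _; apply: oner_neq0. Qed.

Lemma ongoing_play n s i c :
  ongoing n.+1 s -> legal_move s i c -> ongoing n (play s i c).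
Proof.
move=> [nfree ends] [si c_ends]; split.
  move: nfree; rewrite /free_count (cardD1 i) inE si eqxx add1n => -[<-].
  by apply: eq_card => j; rewrite !inE /play; case: (eqVneq j i).
move=> j c'; rewrite /play; case: (eqVneq j i) => [-> [<-] | _]; first exact: c_ends.
exact: ends.
Qed.

Lemma ongoing_free n s : ongoing n s -> exists i, s i = None.
Proof.
move=> [nfree _]; have /card_gt0P[i] : (0 < free_count s)%N by rewrite nfree.
by rewrite inE => /eqP; exists i.
Qed.

Lemma ongoing0_ends s k j : ongoing 0 s -> s k = None -> j != k ->
  ((j : nat) == 0%N) || ((j : nat) == d) -> odflt 0 (s j) != 0.
Proof.
move=> [nfree ends] sk jk j_end; move: nfree.
rewrite /free_count (cardD1 k) inE sk eqxx add1n => -[/card0_eq/(_ j)].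
by rewrite !inE jk /=; case: (s j) (ends j) => // c /(_ c erefl j_end).
Qed.

Lemma start_ongoing : ongoing d (@start_pos K d).
Proof.
split=> //; rewrite /free_count -[RHS](card_ord d.+1).
by apply: eq_card => i; rewrite inE.
Qed.

Lemma pos_poly_coef s j : (pos_poly s)`_j = odflt 0 (s j).
Proof.
rewrite /pos_poly coef_sum (bigD1 j) //= coefZ coefXn eqxx mulr1 big1 ?addr0 //.
by move=> i ij; rewrite coefZ coefXn eq_sym (inj_eq val_inj) (negPf ij) mulr0.
Qed.

Lemma pos_poly_play s i c : s i = None -> pos_poly (play s i c) = c *: 'X^i + pos_poly s.
Proof.
move=> si; rewrite /pos_poly (bigD1 i) //= [in RHS](bigD1 i) //= play_eq si scale0r add0r.
by congr (_ + _); apply: eq_bigr => j ji; rewrite play_ne.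
Qed.

Lemma horner_pos_poly s x : (pos_poly s).[x] = \sum_(i < d.+1) odflt 0 (s i) * x ^+ i.
Proof. by rewrite horner_sum; apply: eq_bigr => i _; rewrite hornerZ hornerXn. Qed.

(* A slot whose Newton segment to the deep point has horizontal length 1 would
   have integral slope whatever M is: Nora must not be left with a_1 or a_(d-1). *)
Definition critical_free s : nat :=
  (s (inord 1) == None) + (s (inord d.-1) == None).

Lemma play_none s i c j : ((play s i c j == None) <= (s j == None))%N.
Proof. by rewrite /play; case: (j == i); case: (s j). Qed.

Lemma critical_free_play s i c : (critical_free (play s i c) <= critical_free s)%N.
Proof. by rewrite leq_add ?play_none. Qed.

Lemma exists_critical_move n s : ongoing n s ->
  exists2 i, s i = None & (critical_free (play s i 1) <= (critical_free s).-1)%N.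
Proof.
move=> s_on; rewrite /critical_free.
have [s1 | s1] := eqVneq (s (inord 1)) None.
  by exists (inord 1); rewrite // play_eq add1n play_none.
have [sd1 | sd1] := eqVneq (s (inord d.-1)) None.
  exists (inord d.-1) => //; move: (play_none s (inord d.-1) 1 (inord 1)).
  by rewrite play_eq (negPf s1); case: (_ == None).
have [i si] := ongoing_free s_on; exists i => //.
move: (play_none s i 1 (inord 1)) (play_none s i 1 (inord d.-1)).
by rewrite (negPf s1) (negPf sd1); do 2 case: (_ == None).
Qed.

Lemma winsS p mover n s : wins p mover n.+1 s =
  if same_player mover p then
    exists i c, legal_move s i c /\ wins p (other mover) n (play s i c)
  else forall i c, legal_move s i c -> wins p (other mover) n (play s i c).
Proof. by []. Qed.

Lemma wins_by_last_move (p : player) (I : nat -> position K d -> Prop) :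
  (forall s, I 0%N s -> exists i c, legal_move s i c /\ winner_of (play s i c) p) ->
  (forall n s, I n.+1 s -> odd n -> exists i c, legal_move s i c /\ I n (play s i c)) ->
  (forall n s, I n.+1 s -> ~~ odd n -> forall i c, legal_move s i c -> I n (play s i c)) ->
  forall n s, I n s -> wins p (if odd n then other p else p) n.+1 s.
Proof.
move=> last own opp.
have same_refl q : same_player q q by case: q.
have same_other q : same_player (other q) q = false by case: q.
elim=> [|n IHn] s Is; first by rewrite /= same_refl; apply: last.
rewrite winsS oddS; case odd_n: (odd n) IHn => /= IHn.
  rewrite same_refl; have [i [c [legal Iplay]]] := own n s Is odd_n.
  by exists i, c; split; last exact: IHn.
rewrite same_other otherK => i c legal.
by apply: IHn; apply: opp legal; rewrite ?odd_n.
Qed.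

End Positions.

Section Strategies.

Variables (K : fieldType) (v : K -> int) (d : nat).
Hypothesis hv : discrete_valuation v.
Implicit Types (s : position K d) (j : 'I_d.+1).

Lemma wanda_last_move s : (0 < d)%N -> ongoing 0 s ->
  exists i c, legal_move s i c /\ winner_of (play s i c) Wanda.
Proof.
move=> d_gt0 s_on; have [k sk] := ongoing_free s_on.
pose j : 'I_d.+1 := if k == ord0 then ord_max else ord0.
have jk : j != k.
  rewrite /j; case: (eqVneq k ord0) => [->|]; last by rewrite eq_sym.
  by rewrite -(inj_eq val_inj) /= -lt0n.
have j_end : ((j : nat) == 0%N) || ((j : nat) == d).
  by rewrite /j; case: ifP; rewrite eqxx ?orbT.
have f0 : pos_poly s != 0.
  by apply: contraNneq (ongoing0_ends s_on sk jk j_end) => f0; rewrite -pos_poly_coef f0 coef0.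
have [x x0 fx] := dv_exists_nonroot hv f0.
have xk0 : x ^+ k != 0 by rewrite expf_neq0.
exists k, (- (pos_poly s).[x] / x ^+ k); split.
  by split=> // _; rewrite mulf_neq0 ?invr_eq0 ?oppr_eq0.
by exists x; rewrite /root pos_poly_play // hornerD hornerZ hornerXn divfK // addNr.
Qed.

Lemma wanda_wins n s : (0 < d)%N -> ongoing n s ->
  wins Wanda (if odd n then other Wanda else Wanda) n.+1 s.
Proof.
move=> d_gt0; apply: wins_by_last_move => [s' | n' s' s_on _ | n' s' s_on _ i c legal].
- exact: wanda_last_move.
- have [i si] := ongoing_free s_on.
  by exists i, 1; split; [exact: legal_move1 | exact: ongoing_play s_on (legal_move1 si)].
- exact: ongoing_play legal.
Qed.

Lemma nora_last_move s : (4 < d)%N -> ongoing 0 s -> critical_free s = 0%N ->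
  exists i c, legal_move s i c /\ winner_of (play s i c) Nora.
Proof.
move=> d_gt4 s_on crit0; have [k sk] := ongoing_free s_on.
have k_crit (m : nat) : (m < d.+1)%N -> s (inord m) != None -> (k : nat) != m.
  move=> m_le sm; apply: contra_neq sm => km.
  by rewrite (_ : inord m = k) //; apply: val_inj; rewrite /= inordK -?km.
have k1 : (k : nat) != 1%N.
  apply: k_crit; first lia.
  by apply: contra_eqN crit0 => /eqP s1; rewrite /critical_free s1.
have kd1 : (k : nat) != d.-1.
  apply: k_crit; first lia.
  by apply: contra_eqN crit0 => /eqP s1; rewrite /critical_free s1 addn1.
pose w j := v (odflt 0 (s j)).
pose B := \sum_(j < d.+1) `|w j|.
have w_bd j : `|w j| <= B by rewrite /B (bigD1 j) //= lerDl sumr_ge0.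
have [M [MB slope0 sloped]] := @exists_nonintegral_slopes d k (w ord0) (w ord_max)
  ((2 * d + 1)%:Z * B) d_gt4 (leq_ord k) k1 kd1.
have [c c0 vc] := dv_surj hv (- M).
exists k, c; split=> [|x]; first by split.
have a_end j : ((j : nat) == 0%N) || ((j : nat) == d) -> odflt 0 (play s k c j) != 0.
  case: (eqVneq j k) => [-> | jk]; first by rewrite play_eq.
  by rewrite play_ne //; apply: ongoing0_ends s_on sk jk.
rewrite /root horner_pos_poly.
apply: (no_root_of_deep_coef hv (k := k) (M := M) (B := B)); rewrite ?play_eq //.
- exact: a_end.
- by apply: a_end; rewrite eqxx orbT.
- by move=> j _ jk; rewrite play_ne //; apply: w_bd.
- by move=> k0; rewrite play_ne; [exact: slope0 k0 | apply: contra k0 => /eqP <-].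
- by move=> kd; rewrite play_ne; [exact: sloped kd | apply: contra kd => /eqP <-].
Qed.

Lemma nora_wins n s : (4 < d)%N -> ongoing n s -> (critical_free s <= n./2)%N ->
  wins Nora (if odd n then other Nora else Nora) n.+1 s.
Proof.
move=> d_gt4 s_on crit; pose I n s := ongoing n s /\ (critical_free s <= n./2)%N.
apply: (wins_by_last_move (I := I)) (conj s_on crit) => {n s s_on crit}.
- move=> s [s_on crit]; apply: nora_last_move => //; lia.
- move=> n s [s_on crit] odd_n; have [i si crit'] := exists_critical_move s_on.
  exists i, 1; split; first exact: legal_move1.
  by split; [exact: ongoing_play s_on (legal_move1 si) | lia].
- move=> n s [s_on crit] even_n i c legal; split; first exact: ongoing_play legal.
  by have := critical_free_play s i c; lia.
Qed.

End Strategies.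

Theorem theorem5 (K : fieldType) (v : K -> int) (d : nat) (first : player) :
  (4 < d)%N -> complete_dvr v ->
  has_winning_strategy K d first (last_mover d first).
Proof.
move=> d_gt4 [hv _]; rewrite /has_winning_strategy.
have : first = if odd d then other (last_mover d first) else last_mover d first.
  by rewrite /last_mover; case: (odd d); rewrite ?otherK.
case: (last_mover d first) => ->.
- by apply: (nora_wins hv d_gt4 (@start_ongoing K d)); rewrite /critical_free /=; lia.
- by apply: (wanda_wins hv _ (@start_ongoing K d)); lia.
Qed.
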